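(* Let $G=(V,E)$ be a finite graph, $q\in\mathbb N$, $\beta\ge0$, and let $P_G$ be the transition matrix of the Swendsen--Wang dynamics for the $q$-state Potts model on $G$ at inverse temperature $\beta$. Let $\sigma,\tau\in\{1,\dots,q\}^V$, $v\in V$ and $k,l\in\{1,\dots,q\}$. Then \[ P_G(\sigma^{v,k},\tau^{v,l})\;\le\;a_3^{\deg_G(v)}\,P_G(\sigma,\tau),\qquad a_3=a_3(\beta,q)=q\,e^{2\beta}-(q-1)e^{\beta}. \]
   Context: Graphs are finite, parallel edges and loops allowed; $\deg_G(v)$ is the number of edges having $v$ as an endvertex. For $\sigma\in\{1,\dots,q\}^V$, $v\in V$, $k\in\{1,\dots,q\}$, $\sigma^{v,k}$ is the configuration equal to $\sigma$ off $v$ and equal to $k$ at $v$. For $A\subseteq E$, $c(A)$ is the number of connected components of $(V,A)$; $E(\sigma)$ is the set of edges whose endvertices have the same color in $\sigma$. With $p=1-e^{-\beta}$, $P_G(\sigma,\tau)=(1-p)^{|E(\sigma)|}\sum_{A\subseteq E(\sigma)\cap E(\tau)}\bigl(\tfrac{p}{1-p}\bigr)^{|A|}q^{-c(A)}$. *)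

From HB Require Import structures.
From mathcomp Require Import all_boot all_order all_algebra.
From mathcomp Require Import all_classical all_reals all_analysis.
Set Implicit Arguments. Unset Strict Implicit. Unset Printing Implicit Defensive.
Import Order.TTheory GRing.Theory Num.Theory.
Local Open Scope ring_scope.

(* A finite multigraph (parallel edges and loops allowed): vertex type V,
   edge type E, each edge e has endvertices (ends e).1 and (ends e).2
   (a loop has both equal). *)

Section Defs.
Variables (V E : finType) (ends : E -> V * V).

(* deg_G(v): number of edges having v as an endvertex (a loop counts once). *)
Definition deg (v : V) : nat :=
  #|[set e : E | ((ends e).1 == v) || ((ends e).2 == v)]|.

Definition adjA (A : {set E}) : rel V :=
  fun x y => [exists e in A, (ends e == (x, y)) || (ends e == (y, x))].

Definition ncomp (A : {set E}) : nat := n_comp (adjA A) (pred_of_simpl predT).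

Variable q : nat.

(* E(sigma): edges whose endvertices have the same colour; colours are 'I_q
   (standing for {1,...,q}). *)
Definition Emono (s : {ffun V -> 'I_q}) : {set E} :=
  [set e : E | s (ends e).1 == s (ends e).2].

Definition upd (s : {ffun V -> 'I_q}) (v : V) (k : 'I_q) : {ffun V -> 'I_q} :=
  [ffun x => if x == v then k else s x].

Variables (R : realType) (beta : R).

Definition pSW : R := 1 - expR (- beta).

Definition PSW (s t : {ffun V -> 'I_q}) : R :=
  (1 - pSW) ^+ #|Emono s| *
  \sum_(A : {set E} | A \subset Emono s :&: Emono t)
     (pSW / (1 - pSW)) ^+ #|A| * (q%:R ^- ncomp A).

Definition a3 : R := q%:R * expR (2 * beta) - (q%:R - 1) * expR beta.
End Defs.

(* A subgraph A of the edge set contributes r^|A| q^-c(A) with r = e^beta - 1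
   to P_G. Adding one edge to A multiplies r^|A| by r and, since it merges at
   most two components, multiplies q^-c(A) by at most q; hence each of the
   deg(v) edges at v enlarges the subgraph sum by a factor at most 1 + r q.
   Recolouring v changes the number of monochromatic edges by at most deg(v),
   which changes the prefactor e^(-beta |E(sigma)|) by a factor at most
   e^(beta deg(v)); and e^beta (1 + r q) = a_3. *)
From HB Require Import structures.
From mathcomp Require Import all_boot all_order all_algebra.
From mathcomp Require Import all_classical all_reals all_analysis.
From mathcomp Require Import ring.
Set Implicit Arguments. Unset Strict Implicit. Unset Printing Implicit Defensive.
Import Order.TTheory GRing.Theory Num.Theory.
Local Open Scope ring_scope.

Section Components.
Variables (V E : finType) (ends : E -> V * V).
Local Notation conn A := (connect (adjA ends A)).

Lemma adjA_sym A : symmetric (adjA ends A).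
Proof.
move=> x y; apply/existsP/existsP => -[e /andP[eA h]].
  by exists e; rewrite eA /= orbC.
by exists e; rewrite eA /= orbC.
Qed.

Lemma adjA_setU1 e0 A x y : adjA ends (e0 |: A) x y =
  adjA ends A x y || ((ends e0 == (x, y)) || (ends e0 == (y, x))).
Proof.
apply/existsP/orP => [[e /andP[]]|].
  rewrite in_setU1 => /orP[/eqP-> h|eA h]; first by right.
  by left; apply/existsP; exists e; rewrite eA.
case=> [/existsP[e /andP[eA h]]|h]; first by exists e; rewrite in_setU1 eA orbT.
by exists e0; rewrite setU11.
Qed.

Lemma connect_setU1 e0 A a b x y : ends e0 = (a, b) ->
  conn (e0 |: A) x y ->
  conn A x y || ((conn A x a || conn A x b) && (conn A a y || conn A b y)).
Proof.
move=> e0ab /connectP[p pth ->]; elim: p x pth => [|z p IH] x /=.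
  by rewrite connect0.
case/andP=> + /IH; rewrite adjA_setU1 e0ab !xpair_eqE => /orP[exz|].
  have cxz := connect1 exz.
  case/orP=> [czy | /andP[h1 ->]]; first by rewrite (connect_trans cxz czy).
  by case/orP: h1 => h; rewrite (connect_trans cxz h) ?orbT.
by case/orP=> /andP[/eqP<- /eqP<-] /orP[|/andP[_]] ->; rewrite connect0 ?orbT.
Qed.

(* The new edge (a, b) can only join vertices through the component of b. *)
Lemma connect_setU1_avoid e0 A a b x y : ends e0 = (a, b) ->
  ~~ conn A x b -> ~~ conn A b y -> conn (e0 |: A) x y -> conn A x y.
Proof.
move=> e0ab /negbTE xb /negbTE yb /(connect_setU1 e0ab).
by rewrite xb yb !orbF => /orP[// | /andP[/connect_trans]]; apply.
Qed.

Lemma ncomp_setU1 e0 A : (ncomp ends A <= (ncomp ends (e0 |: A)).+1)%N.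
Proof.
set e := adjA ends A; set e' := adjA ends (e0 |: A).
have se : connect_sym e := sym_connect_sym (adjA_sym A).
have se' : connect_sym e' := sym_connect_sym (adjA_sym (e0 |: A)).
case e0ab: (ends e0) => [a b].
have ncompE f : n_comp f (pred_of_simpl predT) = #|[set x | roots f x]|.
  by apply: eq_card => x; rewrite !inE andbT.
rewrite /ncomp !ncompE -/e -/e'.
set R0 := [set x | roots e x] :\ fingraph.root e b.
have inj : {in R0 &, injective (fingraph.root e')}.
  move=> r1 r2; rewrite !inE => /andP[n1 /eqP rt1] /andP[n2 /eqP rt2].
  move/(fingraph.rootP se') => c12; rewrite -rt1 -rt2; apply/(fingraph.rootP se).
  apply: connect_setU1_avoid e0ab _ _ c12.
    by apply: contra n1 => /(fingraph.rootP se) <-; rewrite rt1.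
  by apply: contra n2; rewrite se => /(fingraph.rootP se) <-; rewrite rt2.
have sub : fingraph.root e' @: R0 \subset [set x | roots e' x].
  by apply/fintype.subsetP => _ /finset.imsetP[x _ ->]; rewrite inE roots_root.
rewrite (cardsD1 (fingraph.root e b)) -/R0.
have := subset_leq_card sub; rewrite (card_in_imset inj) => h.
by case: (_ \in _); rewrite /= ?add0n ?add1n ?ltnS // (leq_trans h).
Qed.

End Components.

Lemma sum_subset_setU1 (T : finType) (M : nmodType) (f : {set T} -> M)
    (e : T) (F : {set T}) : e \notin F ->
  \sum_(A : {set T} | A \subset e |: F) f A =
  \sum_(A : {set T} | A \subset F) f A + \sum_(A : {set T} | A \subset F) f (e |: A).
Proof.
move=> eF; rewrite (bigID (fun A : {set T} => e \in A)) /= addrC; congr (_ + _).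
  by apply: eq_bigl => A; rewrite -subsetD1 setU1K.
rewrite (reindex_onto (fun A => e |: A) (fun A => A :\ e)) /=; last first.
  by move=> A /andP[_ eA]; apply: finset.setD1K.
apply: eq_bigl => A; apply/idP/idP => [/andP[/andP[sAF _] /eqP <-]|sAF].
  by rewrite -(setU1K eF) finset.setSD.
have eA : e \notin A by apply: contra eF => /(fintype.subsetP sAF).
by rewrite finset.setUS // setU11 setU1K // eqxx.
Qed.

Section SubgraphSum.
Variables (V E : finType) (ends : E -> V * V) (R : realType) (r Q : R).
Hypotheses (r_ge0 : 0 <= r) (Q_ge1 : 1 <= Q).

Definition subgraph_weight (A : {set E}) : R := r ^+ #|A| / Q ^+ ncomp ends A.

Definition subgraph_sum (F : {set E}) : R :=
  \sum_(A : {set E} | A \subset F) subgraph_weight A.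

Let Q_gt0 : 0 < Q. Proof. exact: lt_le_trans ltr01 Q_ge1. Qed.
Let rQ_ge0 : 0 <= r * Q. Proof. by rewrite mulr_ge0 // ltW. Qed.

Lemma subgraph_weight_ge0 A : 0 <= subgraph_weight A.
Proof. by rewrite divr_ge0 // exprn_ge0 // ltW. Qed.

Lemma subgraph_sum_ge0 F : 0 <= subgraph_sum F.
Proof. exact/sumr_ge0/(fun A _ => subgraph_weight_ge0 A). Qed.

Lemma subgraph_weight_setU1 (e : E) (A : {set E}) : e \notin A ->
  subgraph_weight (e |: A) <= r * Q * subgraph_weight A.
Proof.
move=> eA; rewrite /subgraph_weight cardsU1 eA add1n exprS -!mulrA.
apply: ler_wpM2l => //; rewrite mulrCA; apply: ler_wpM2l; first exact: exprn_ge0.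
rewrite -[leLHS]div1r ler_pdivrMr ?exprn_gt0 // mulrAC.
rewrite ler_pdivlMr ?exprn_gt0 // mul1r -exprS.
exact/ler_weXn2l/ncomp_setU1.
Qed.

Lemma subgraph_sumS (G F : {set E}) : G \subset F -> subgraph_sum G <= subgraph_sum F.
Proof.
move=> sGF; rewrite [leRHS](bigID (fun A : {set E} => A \subset G)) /=.
rewrite (eq_bigl (fun A : {set E} => A \subset G)); last first.
  by move=> A; apply: andb_idl => /fintype.subset_trans; apply.
by rewrite lerDl sumr_ge0 // => A _; apply: subgraph_weight_ge0.
Qed.

Lemma subgraph_sum_setU1 (e : E) (F : {set E}) :
  subgraph_sum (e |: F) <= (1 + r * Q) * subgraph_sum F.
Proof.
have [eF|eF] := boolP (e \in F).
  rewrite (finset.setUidPr _) ?finset.sub1set //.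
  by apply: ler_peMl; rewrite ?subgraph_sum_ge0 ?lerDl.
rewrite /subgraph_sum sum_subset_setU1 // mulrDl mul1r lerD // mulr_sumr.
apply: ler_sum => A sAF; apply: subgraph_weight_setU1.
by apply: contra eF => /(fintype.subsetP sAF).
Qed.

Lemma subgraph_sum_setU (G H : {set E}) :
  subgraph_sum (G :|: H) <= (1 + r * Q) ^+ #|H| * subgraph_sum G.
Proof.
move cardH: #|H| => n; elim: n H cardH => [|n IH] H cardH.
  by rewrite (cards0_eq cardH) finset.setU0 expr0 mul1r.
have [e eH] : exists e, e \in H by apply/set0Pn; rewrite -card_gt0 cardH.
rewrite -(finset.setD1K eH) finset.setUCA exprS -mulrA.
apply: le_trans (subgraph_sum_setU1 _ _) _.
apply: ler_wpM2l; first by rewrite addr_ge0.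
by apply: IH; move: cardH; rewrite (cardsD1 e) eH => -[].
Qed.

Lemma subgraph_sum_le_setU (F G D : {set E}) : F \subset G :|: D ->
  subgraph_sum F <= (1 + r * Q) ^+ #|D| * subgraph_sum G.
Proof. by move/subgraph_sumS/le_trans; apply; apply: subgraph_sum_setU. Qed.

End SubgraphSum.

Section Recolouring.
Variables (V E : finType) (ends : E -> V * V) (q : nat).
Implicit Types (s t : {ffun V -> 'I_q}) (v : V) (k : 'I_q).

Definition star v : {set E} := [set e | ((ends e).1 == v) || ((ends e).2 == v)].

Lemma card_star v : #|star v| = deg ends v. Proof. by []. Qed.

Lemma Emono_upd_notin_star s v k e : e \notin star v ->
  (e \in Emono ends (upd s v k)) = (e \in Emono ends s).
Proof.
by rewrite inE negb_or => /andP[/negbTE n1 /negbTE n2]; rewrite !inE !ffunE n1 n2.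
Qed.

Lemma Emono_subset_upd s v k : Emono ends s \subset Emono ends (upd s v k) :|: star v.
Proof.
apply/fintype.subsetP => e es; rewrite finset.in_setU.
have [|ev] := boolP (e \in star v); first by rewrite orbT.
by rewrite orbF Emono_upd_notin_star.
Qed.

Lemma card_Emono_upd s v k :
  (#|Emono ends s| <= #|Emono ends (upd s v k)| + deg ends v)%N.
Proof.
rewrite -card_star (leq_trans (subset_leq_card (Emono_subset_upd s v k))) //.
by rewrite cardsU leq_subr.
Qed.

Lemma Emono2_upd_subset s t v k l :
  Emono ends (upd s v k) :&: Emono ends (upd t v l) \subset
  (Emono ends s :&: Emono ends t) :|: star v.
Proof.
apply/fintype.subsetP => e; rewrite finset.in_setU !finset.in_setI.
have [|ev] := boolP (e \in star v); first by rewrite orbT.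
by rewrite orbF !Emono_upd_notin_star.
Qed.

End Recolouring.

Lemma ler_exprVn_shift (R : realFieldType) (y : R) (m n d : nat) :
  1 <= y -> (m <= n + d)%N -> y^-1 ^+ n <= y ^+ d * y^-1 ^+ m.
Proof.
move=> y_ge1 le_m_nd; have y_gt0 : 0 < y := lt_le_trans ltr01 y_ge1.
have -> : y^-1 ^+ n = y ^+ d * y^-1 ^+ (n + d).
  by rewrite exprD mulrCA -exprMn mulfV ?gt_eqF // expr1n mulr1.
apply: ler_wpM2l; first by rewrite exprn_ge0 ?ltW.
have yV_ge0 : 0 <= y^-1 by rewrite invr_ge0 ltW.
have yV_le1 : y^-1 <= 1 by rewrite invf_le1.
exact: ler_wiXn2l yV_ge0 yV_le1 _ _ le_m_nd.
Qed.

Section SwendsenWangWeights.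
Variables (R : realType) (beta : R).

Lemma one_sub_pSW : 1 - pSW beta = (expR beta)^-1.
Proof. by rewrite /pSW subKr expRN. Qed.

Lemma pSW_odds : pSW beta / (1 - pSW beta) = expR beta - 1.
Proof.
by rewrite one_sub_pSW invrK /pSW mulrBl mul1r -expRD addNr expR0.
Qed.

Lemma a3_factor (q : nat) : a3 q beta = expR beta * (1 + (expR beta - 1) * q%:R).
Proof. by rewrite /a3 (_ : 2 * beta = beta + beta) ?expRD; ring. Qed.

Lemma PSW_subgraph_sum (V E : finType) (ends : E -> V * V) (q : nat)
    (s t : {ffun V -> 'I_q}) :
  PSW ends beta s t = (expR beta)^-1 ^+ #|Emono ends s| *
    subgraph_sum ends (expR beta - 1) q%:R (Emono ends s :&: Emono ends t).
Proof. by rewrite /PSW pSW_odds one_sub_pSW. Qed.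

End SwendsenWangWeights.

Theorem lemma3p8 (V E : finType) (ends : E -> V * V) (q : nat)
    (R : realType) (beta : R) (hbeta : 0 <= beta)
    (sigma tau : {ffun V -> 'I_q}) (v : V) (k l : 'I_q) :
  PSW ends beta (upd sigma v k) (upd tau v l)
    <= a3 q beta ^+ deg ends v * PSW ends beta sigma tau.
Proof.
set y := expR beta; set r := y - 1.
have y_ge1 : 1 <= y by rewrite -expR0 ler_expR.
have r_ge0 : 0 <= r by rewrite subr_ge0.
have q_ge1 : 1 <= q%:R :> R by rewrite ler1n (leq_ltn_trans (leq0n k)).
have prefactor_le := ler_exprVn_shift y_ge1 (card_Emono_upd ends sigma v k).
have sum_le := subgraph_sum_le_setU ends r_ge0 q_ge1 (Emono2_upd_subset ends sigma tau v k l).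
rewrite !PSW_subgraph_sum a3_factor exprMn -card_star mulrACA.
apply: ler_pM prefactor_le sum_le; last exact: subgraph_sum_ge0.
by rewrite exprn_ge0 // invr_ge0 ltW ?expR_gt0.
Qed.
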